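(* Let $T$ be a tree and let $G$ be the simple graph obtained from the disjoint union of $T$ and an isolated vertex $u^*$ by adding $t$ edges joining $u^*$ to $t$ distinct vertices of $T$, where $1\le t\le v(T)$. Then $\phi(G)=\lfloor t/2\rfloor$.
   Context: $v(T)$ is the number of vertices of $T$. For a graph $G$, $\phi(G)$ is the maximum number of pairwise edge-disjoint cycles in $G$. *)

From mathcomp Require Import all_boot.
Set Implicit Arguments. Unset Strict Implicit. Unset Printing Implicit Defensive.

Section Graphs.
Variable V : finType.

Definition simple_graph (e : rel V) : Prop :=
  symmetric e /\ irreflexive e.

Definition is_cycle (e : rel V) (c : seq V) : bool :=
  [&& 2 < size c, uniq c & cycle e c].

Definition cycle_edges (c : seq V) : seq {set V} :=
  [seq [set p.1; p.2] | p <- zip c (rot 1 c)].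

Definition edge_disjoint (c1 c2 : seq V) : bool :=
  ~~ has (fun E => E \in cycle_edges c2) (cycle_edges c1).

Definition cycle_packing (e : rel V) (cs : seq (seq V)) : Prop :=
  all (is_cycle e) cs /\
  forall i j, i < size cs -> j < size cs -> i != j ->
    edge_disjoint (nth [::] cs i) (nth [::] cs j).

Definition phi_is (e : rel V) (n : nat) : Prop :=
  (exists cs, cycle_packing e cs /\ size cs = n) /\
  (forall cs, cycle_packing e cs -> size cs <= n).

Definition is_tree (e : rel V) : Prop :=
  simple_graph e /\ 0 < #|V| /\ (forall x y, connect e x y) /\
  (forall c, ~~ is_cycle e c).

End Graphs.

(* G = T + isolated vertex u* (= None), joined to the vertices of S. *)
Definition add_apex (V : finType) (eT : rel V) (S : {set V}) : rel (option V) :=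
  fun a b => match a, b with
  | Some x, Some y => eT x y
  | None, Some y => y \in S
  | Some x, None => x \in S
  | None, None => false
  end.

From mathcomp Require Import all_boot zify.
From Stdlib Require Import Classical.
Set Implicit Arguments. Unset Strict Implicit. Unset Printing Implicit Defensive.

(* Every cycle of G passes through u*, since T is acyclic, and so uses two of
   the t edges at u*; edge-disjoint cycles use disjoint pairs of them, hence
   there are at most t/2 of them.  Conversely, pair up the neighbours of u*
   and join each pair by a walk in T, choosing such a family of minimum total
   length.  A repeated vertex on a walk could be shortcut, and two walks
   sharing an edge could be re-paired at that edge into two shorter walks, so
   the walks are edge-disjoint paths; closing each of them through u* gives
   floor(t/2) edge-disjoint cycles. *)

Section ZipRot.
Variables T1 T2 : Type.

Lemma take_zip (s : seq T1) (t : seq T2) n : take n (zip s t) = zip (take n s) (take n t).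
Proof. by elim: s t n => [|a s IH] [|b t] [|n] //=; rewrite ?IH //; case: take. Qed.

Lemma drop_zip (s : seq T1) (t : seq T2) n : drop n (zip s t) = zip (drop n s) (drop n t).
Proof. by elim: s t n => [|a s IH] [|b t] [|n] //=; case: drop. Qed.

Lemma rot_zip (s : seq T1) (t : seq T2) n : size s = size t ->
  rot n (zip s t) = zip (rot n s) (rot n t).
Proof. by move=> eq_st; rewrite /rot drop_zip take_zip zip_cat // !size_drop eq_st. Qed.

Lemma zip_map2 R1 R2 (f : T1 -> R1) (g : T2 -> R2) s t :
  zip (map f s) (map g t) = [seq (f p.1, g p.2) | p <- zip s t].
Proof. by elim: s t => [|a s IH] [|b t] //=; rewrite IH. Qed.

End ZipRot.

Section HeadLast.
Variable T : Type.

Lemma zip_cons_rcons (x z : T) s :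
  zip (x :: s) (rcons s z) = rcons (zip (x :: s) s) (last x s, z).
Proof. by elim: s x => [|a s IH] x //=; rewrite IH. Qed.

Lemma head_rev (x : T) s : head x (rev s) = last x s.
Proof. by case/lastP: s => // s y; rewrite rev_rcons last_rcons. Qed.

Lemma last_rev (x : T) s : last x (rev s) = head x s.
Proof. by rewrite -[in RHS](revK s) head_rev. Qed.

Lemma head_cat_cons (x0 y : T) s1 s2 : head x0 (s1 ++ y :: s2) = head y s1.
Proof. by case: s1. Qed.

Lemma last_cat_cons (x0 y : T) s1 s2 : last x0 (s1 ++ y :: s2) = last y s2.
Proof. by rewrite last_cat. Qed.

End HeadLast.

Section SeqSplit.
Variable T : eqType.

Lemma zip_behead_split (w : seq T) x y : (x, y) \in zip w (behead w) ->
  exists p1 p2, w = p1 ++ x :: y :: p2.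
Proof.
elim: w => [|a [|b w] IH] //=; rewrite inE => /orP[/eqP[-> ->] | /IH[p1 [p2 ->]]].
  by exists [::], w.
by exists (a :: p1), p2.
Qed.

Lemma not_uniq_split (w : seq T) : ~~ uniq w ->
  exists p1 x p2 p3, w = p1 ++ x :: p2 ++ x :: p3.
Proof.
elim: w => [|a w IH] //=; rewrite negb_and negbK => /orP[/splitPr[p2 p3] | ].
  by exists [::], a, p2, p3.
by case/IH => p1 [x [p2 [p3 ->]]]; exists (a :: p1), x, p2, p3.
Qed.

Lemma perm_eq_nth2 x0 (s : seq T) i j : i < size s -> j < size s -> i != j ->
  exists rest, perm_eq s (nth x0 s i :: nth x0 s j :: rest).
Proof.
elim: s i j => [|a s IH] [|i] [|j] //= lt_i lt_j.
- move: (perm_to_rem (mem_nth x0 lt_j)) => perm_s _.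
  by exists (rem (nth x0 s j) s); rewrite perm_cons.
- move: (perm_to_rem (mem_nth x0 lt_i)) => perm_s _.
  exists (rem (nth x0 s i) s); rewrite perm_sym.
  by rewrite -[_ :: a :: _]/([:: _] ++ [:: a] ++ _) perm_catCA /= perm_cons perm_sym.
- move=> ne_ij; have [rest perm_s] := IH i j lt_i lt_j ne_ij.
  exists (a :: rest); rewrite perm_sym -[_ :: _ :: a :: _]/([:: _; _] ++ [:: a] ++ _).
  by rewrite perm_catCA /= perm_cons perm_sym.
Qed.

End SeqSplit.

Lemma set2_inj (T : finType) (u v u' v' : T) :
  [set u; v] = [set u'; v'] -> (u = u' /\ v = v') \/ (u = v' /\ v = u').
Proof.
move=> E.
have : u \in [set u'; v'] by rewrite -E !inE eqxx.
have : v \in [set u'; v'] by rewrite -E !inE eqxx orbT.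
have : u' \in [set u; v] by rewrite E !inE eqxx.
have : v' \in [set u; v] by rewrite E !inE eqxx orbT.
by rewrite !inE; do 4 case/orP=> /eqP ?; subst; auto.
Qed.

Section CycleEdges.
Variables (T : finType) (r : rel T).

Lemma cycle_zip_rot c u v : cycle r c -> (u, v) \in zip c (rot 1 c) -> r u v.
Proof.
case: c => // x p; rewrite rot1_cons /=.
elim: p {1 3}x => [|y p IH] z /=; first by rewrite andbT inE => rzx /eqP[-> ->].
by case/andP=> rzy path_p; rewrite inE => /orP[/eqP[-> ->] // | /IH->].
Qed.

Lemma mem_cycle_edges_rot i (c : seq T) E :
  (E \in cycle_edges (rot i c)) = (E \in cycle_edges c).
Proof. by rewrite /cycle_edges rot_rot -rot_zip ?size_rot // map_rot mem_rot. Qed.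

End CycleEdges.

Section ApexUpperBound.
Variables (V : finType) (e : rel V) (S : {set V}).
Local Notation G := (add_apex e S).

Lemma path_add_apex_Some x p : path G (Some x) (map Some p) = path e x p.
Proof. by elim: p x => //= y p IH x; rewrite IH. Qed.

Lemma cycle_add_apex_Some c : cycle G (map Some c) = cycle e c.
Proof. by case: c => //= x p; rewrite -map_rcons path_add_apex_Some. Qed.

Definition apex_nbhd (c : seq (option V)) : {set V} :=
  [set s | [set None; Some s] \in cycle_edges c].

Lemma apex_nbhd_rot i c : apex_nbhd (rot i c) = apex_nbhd c.
Proof. by apply/setP => s; rewrite !inE mem_cycle_edges_rot. Qed.

Lemma apex_nbhd_sub c : is_cycle G c -> apex_nbhd c \subset S.
Proof.
case/and3P=> _ _ cyc_c; apply/subsetP => s; rewrite inE => /mapP[[u v] uv E].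
have := cycle_zip_rot cyc_c uv.
by case: (set2_inj E) => /= -[<- <-].
Qed.

Hypothesis e_acyclic : forall c, ~~ is_cycle e c.

Lemma apex_in_cycle c : is_cycle G c -> None \in c.
Proof.
move=> cyc_c; apply/negPn/negP => apex_c.
have Ec : map Some (pmap id c) = c.
  by elim: c apex_c {cyc_c} => //= -[x|] c IH; rewrite inE //= => /IH->.
apply/negP: (e_acyclic (pmap id c)); move: cyc_c.
by rewrite /is_cycle -{1 2 3}Ec size_map (map_inj_uniq (@Some_inj _)) cycle_add_apex_Some negbK.
Qed.

Lemma apex_nbhd_card c : is_cycle G c -> 1 < #|apex_nbhd c|.
Proof.
move=> cyc_c; case/rot_to: (apex_in_cycle cyc_c) => i s Ec.
have : is_cycle G (None :: s) by rewrite -Ec /is_cycle size_rot rot_uniq rot_cycle.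
rewrite -(apex_nbhd_rot i) Ec {c cyc_c Ec i}.
case: s => [|[y|] [|z s]] /and3P[//= _ uniq_s _]; rewrite ?inE ?eqxx in uniq_s => //.
case/and4P: uniq_s => apex_s y_s _ _.
have : last z s \in z :: s by apply: mem_last.
rewrite inE; case El: (last z s) => [l|] l_s; last by rewrite l_s orbT in apex_s.
have ne_yl : y != l by apply: contraNneq y_s => ->.
suff /subset_leq_card : [set y; l] \subset apex_nbhd [:: None, Some y, z & s].
  by rewrite cards2 ne_yl.
apply/subsetP => q; rewrite in_set2 => /orP[] /eqP->; rewrite in_set; apply/mapP.
- by exists (None, Some y); rewrite //= inE eqxx.
- exists (Some l, None); last by rewrite setUC.
  by rewrite rot1_cons zip_cons_rcons mem_rcons /= El inE eqxx.
Qed.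

Lemma cycle_packing_size cs : cycle_packing G cs -> (size cs).*2 <= #|S|.
Proof.
case=> cycle_cs disj_cs.
pose N (i : 'I_(size cs)) := apex_nbhd (nth [::] cs i).
have cycle_nth (i : 'I_(size cs)) : is_cycle G (nth [::] cs i).
  by apply: (allP cycle_cs); rewrite mem_nth.
have disj_N i j : i != j -> [disjoint N i & N j].
  move=> ne_ij; rewrite -setI_eq0; apply/eqP/setP => s; rewrite !inE.
  apply/negbTE/andP => -[s_i s_j].
  by case/hasP: (disj_cs i j (ltn_ord i) (ltn_ord j) ne_ij); exists [set None; Some s].
have card_N : #|\bigcup_i N i| = \sum_i #|N i|.
  by rewrite -sum1_card (partition_disjoint_bigcup _ _ disj_N); under eq_bigr do rewrite sum1_card.
have /subset_leq_card : \bigcup_i N i \subset S.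
  by apply/bigcupsP => i _; apply: apex_nbhd_sub.
apply: leq_trans; rewrite card_N -mul2n -[in leqLHS](card_ord (size cs)) mulnC -sum_nat_const.
by apply: leq_sum => i _; apply: apex_nbhd_card.
Qed.

End ApexUpperBound.

Section Linkage.
Variables (V : finType) (e : rel V) (S : {set V}) (x0 : V).

Definition walk (w : seq V) := (w != [::]) && sorted e w.

(* Walks are nonempty, so the default x0 of [head] and [last] never matters. *)

Definition walk_ends (ws : seq (seq V)) :=
  flatten [seq [:: head x0 w; last x0 w] | w <- ws].

Definition linkage (ws : seq (seq V)) :=
  [&& all walk ws, uniq (walk_ends ws) & all (fun v => v \in S) (walk_ends ws)].

Definition total_length (ws : seq (seq V)) := sumn (map size ws).

Lemma linkage_perm ws ws' : perm_eq ws ws' -> linkage ws = linkage ws'.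
Proof.
move=> perm_ws; rewrite /linkage (perm_all _ perm_ws).
have perm_ends : perm_eq (walk_ends ws) (walk_ends ws') by apply/perm_flatten/perm_map.
by rewrite (perm_uniq perm_ends) (perm_all _ perm_ends).
Qed.

Lemma total_length_perm ws ws' : perm_eq ws ws' -> total_length ws = total_length ws'.
Proof. by move=> perm_ws; apply/perm_sumn/perm_map. Qed.

Lemma linkage_cons w ws : linkage (w :: ws) ->
  [/\ walk w, head x0 w != last x0 w, head x0 w \in S, last x0 w \in S & linkage ws].
Proof.
rewrite /linkage /walk_ends /= => /and3P[/andP[walk_w walk_ws]].
rewrite inE negb_or => /andP[/andP[ne_hl _] /andP[_ uniq_ws]] /and3P[h_S l_S S_ws].
by split; rewrite // walk_ws uniq_ws S_ws.
Qed.

Lemma linkage_ends_disjoint w1 w2 ws v : linkage (w1 :: w2 :: ws) ->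
  v \in [:: head x0 w1; last x0 w1] -> v \notin [:: head x0 w2; last x0 w2].
Proof.
case/and3P=> _ + _ v1; apply: contraL => v2.
rewrite -[uniq _]/(uniq ([:: head x0 w1; last x0 w1] ++ [:: head x0 w2; last x0 w2] ++ walk_ends ws)).
rewrite cat_uniq has_cat; apply/and3P => -[_ /norP[/hasPn dis _] _].
by rewrite (negbTE (dis v v2)) in v1.
Qed.

Lemma linkage_replace1 w w' ws : linkage (w :: ws) -> walk w' ->
  head x0 w' = head x0 w -> last x0 w' = last x0 w -> linkage (w' :: ws).
Proof. by rewrite /linkage /walk_ends /= => /and3P[/andP[_ ->] ? ?] -> -> ->; apply/and3P. Qed.

Lemma linkage_replace2 w1 w2 w1' w2' ws :
  linkage (w1 :: w2 :: ws) -> walk w1' -> walk w2' ->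
  perm_eq [:: head x0 w1'; last x0 w1'; head x0 w2'; last x0 w2']
          [:: head x0 w1; last x0 w1; head x0 w2; last x0 w2] ->
  linkage (w1' :: w2' :: ws).
Proof.
move=> link_ws walk1 walk2 perm_hl.
have perm_ends : perm_eq (walk_ends (w1' :: w2' :: ws)) (walk_ends (w1 :: w2 :: ws)).
  rewrite -[walk_ends (w1' :: _)]/([:: _; _; _; _] ++ walk_ends ws).
  by rewrite -[walk_ends (w1 :: _)]/([:: _; _; _; _] ++ walk_ends ws) perm_cat2r.
move: link_ws; rewrite /linkage (perm_uniq perm_ends) (perm_all _ perm_ends) /= walk1 walk2.
by case/and3P=> /and3P[_ _ ->] -> ->.
Qed.

Hypothesis e_sym : symmetric e.

Lemma sorted_rev_sym s : sorted e (rev s) = sorted e s.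
Proof. by rewrite rev_sorted; case: s => //= x s; apply: eq_path => y z; apply: e_sym. Qed.

Lemma linkage_rev2 w1 w2 ws : linkage (w1 :: w2 :: ws) -> linkage (w1 :: rev w2 :: ws).
Proof.
move=> link_ws; have [walk1 _ _ _ /linkage_cons[walk2 _ _ _ _]] := linkage_cons link_ws.
apply: (linkage_replace2 link_ws) => //.
  by move: walk2; rewrite /walk -!size_eq0 size_rev sorted_rev_sym.
by rewrite head_rev last_rev !perm_cons (perm_catC [:: _] [:: _]).
Qed.

Lemma linkage_shortcut p1 z p2 p3 ws :
  linkage ((p1 ++ z :: p2 ++ z :: p3) :: ws) -> linkage ((p1 ++ z :: p3) :: ws).
Proof.
move=> link_ws; have [/andP[_ sorted_w] _ _ _ _] := linkage_cons link_ws.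
have sorted_p1 : sorted e (rcons p1 z).
  by move: sorted_w; rewrite sorted_cat_cons => /andP[].
have path_p3 : path e z p3.
  by move: sorted_w; rewrite -cat_cons catA sorted_cat_cons => /andP[].
apply: (linkage_replace1 link_ws).
- by rewrite /walk sorted_cat_cons sorted_p1 path_p3 -size_eq0 size_cat addnS.
- by rewrite !head_cat_cons.
- by rewrite -cat_cons catA !last_cat_cons.
Qed.

Lemma linkage_uncross p1 x y p2 q1 q2 ws :
  linkage ((p1 ++ x :: y :: p2) :: (q1 ++ x :: y :: q2) :: ws) ->
  linkage ((p1 ++ x :: rev q1) :: (rev p2 ++ y :: q2) :: ws).
Proof.
move=> link_ws.
have [/andP[_ sorted1] _ _ _ /linkage_cons[/andP[_ sorted2] _ _ _ _]] := linkage_cons link_ws.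
move: sorted1 sorted2; rewrite !sorted_cat_cons => /andP[sorted_p1 /andP[_ path_p2]].
case/andP=> sorted_q1 /andP[_ path_q2].
apply: (linkage_replace2 link_ws).
- rewrite /walk sorted_cat_cons sorted_p1 -size_eq0 size_cat addnS /=.
  by rewrite -[path _ _ _]/(sorted e (x :: rev q1)) -rev_rcons sorted_rev_sym.
- rewrite /walk -size_eq0 size_cat addnS sorted_cat_cons -rev_cons sorted_rev_sym.
  by apply/and3P.
- rewrite !head_cat_cons !last_cat_cons head_rev last_rev perm_cons.
  by apply/permPl; apply: (perm_catCA [:: _] [:: _] [:: _]).
Qed.

Lemma pairing_walks (s : seq V) : {in s &, forall x y, connect e x y} -> uniq s ->
  exists ws, [/\ all walk ws, uniq (walk_ends ws), {subset walk_ends ws <= s}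
               & size ws = (size s)./2].
Proof.
have [n] := ubnP (size s); elim: n s => // n IH [|a [|b s]] /= lt_s conn_s uniq_s;
  try by exists [::].
case/and3P: uniq_s; rewrite inE negb_or => /andP[ne_ab a_s] b_s uniq_s.
have conn_s' : {in s &, forall x y, connect e x y}.
  by move=> x y x_s y_s; apply: conn_s; rewrite !inE ?x_s ?y_s !orbT.
have [ws [walk_ws uniq_ws sub_ws size_ws]] := IH s ltac:(lia) conn_s' uniq_s.
have /connectP[p path_p last_p] : connect e a b by apply: conn_s; rewrite !inE eqxx ?orbT.
exists ((a :: p) :: ws); split; rewrite /walk_ends /= -/(walk_ends ws) -?last_p.
- by rewrite walk_ws andbT.
- rewrite inE negb_or ne_ab uniq_ws.
  by rewrite (contra (@sub_ws a) a_s) (contra (@sub_ws b) b_s).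
- by move=> z; rewrite !inE => /or3P[-> | -> | /sub_ws->]; rewrite ?orbT.
- by rewrite size_ws.
Qed.

Lemma linkage_exists : {in S &, forall x y, connect e x y} ->
  exists ws, linkage ws /\ size ws = #|S|./2.
Proof.
move=> conn_S.
have conn_enum : {in enum S &, forall x y, connect e x y}.
  by move=> x y; rewrite !mem_enum; apply: conn_S.
have [ws [walk_ws uniq_ws sub_ws size_ws]] := pairing_walks conn_enum (enum_uniq S).
exists ws; rewrite /linkage walk_ws uniq_ws size_ws -cardE; split => //.
by apply/allP => v /sub_ws; rewrite mem_enum.
Qed.

Definition min_linkage ws := linkage ws /\
  forall ws', linkage ws' -> size ws' = size ws -> total_length ws <= total_length ws'.

Lemma min_linkage_exists ws0 : linkage ws0 ->
  exists ws, min_linkage ws /\ size ws = size ws0.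
Proof.
have [n] := ubnP (total_length ws0); elim: n ws0 => // n IH ws0 lt_ws0 link_ws0.
have [[ws [link_ws size_ws lt_ws]] | no_shorter] := classic
  (exists ws, [/\ linkage ws, size ws = size ws0 & total_length ws < total_length ws0]).
  have [ws' [min_ws' size_ws']] := IH ws ltac:(lia) link_ws.
  by exists ws'; rewrite size_ws' size_ws.
exists ws0; do 2!split => //; move=> ws link_ws size_ws; rewrite leqNgt.
by apply/negP => lt_ws; apply: no_shorter; exists ws.
Qed.

Lemma min_linkage_perm ws ws' : perm_eq ws ws' -> min_linkage ws -> min_linkage ws'.
Proof.
move=> perm_ws [link_ws min_ws]; split; first by rewrite -(linkage_perm perm_ws).
move=> ws'' link'' size''; rewrite -(total_length_perm perm_ws).
by apply: min_ws; rewrite // size'' (perm_size perm_ws).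
Qed.

Lemma min_linkage_uniq w ws : min_linkage (w :: ws) -> uniq w.
Proof.
case=> link_ws min_ws; apply/negPn/negP => /not_uniq_split[p1 [z [p2 [p3 Ew]]]].
rewrite Ew in link_ws min_ws; have := min_ws _ (linkage_shortcut link_ws) erefl.
by rewrite /total_length /= !size_cat /= size_cat /=; lia.
Qed.

Lemma min_linkage_rev2 w1 w2 ws :
  min_linkage (w1 :: w2 :: ws) -> min_linkage (w1 :: rev w2 :: ws).
Proof.
case=> link_ws min_ws; split; first exact: linkage_rev2.
by rewrite /total_length /= size_rev; apply: min_ws.
Qed.

Lemma min_linkage_no_common_edge p1 x y p2 q1 q2 ws :
  ~ min_linkage ((p1 ++ x :: y :: p2) :: (q1 ++ x :: y :: q2) :: ws).
Proof.
case=> link_ws min_ws; have := min_ws _ (linkage_uncross link_ws) erefl.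
by rewrite /total_length /= !size_cat /= !size_rev; lia.
Qed.

Definition apex_cycle (w : seq V) : seq (option V) := None :: map Some w.

Lemma apex_cycle_is_cycle w : walk w -> uniq w -> head x0 w != last x0 w ->
  head x0 w \in S -> last x0 w \in S -> is_cycle (add_apex e S) (apex_cycle w).
Proof.
case: w => // a p /andP[_ path_p] uniq_ap /= ne_al a_S l_S.
apply/and3P; split.
- by case: p ne_al {path_p uniq_ap l_S} => [|? ?]; rewrite /= ?eqxx.
- rewrite /apex_cycle cons_uniq (map_inj_uniq (@Some_inj _)) uniq_ap andbT.
  by apply/mapP => -[].
- by rewrite /= rcons_path path_add_apex_Some last_map; apply/and3P.
Qed.

Lemma mem_cycle_edges_apex_cycle w E : w != [::] ->
  E \in cycle_edges (apex_cycle w) ->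
  (exists2 v, v \in [:: head x0 w; last x0 w] & E = [set None; Some v]) \/
  (exists x y, (x, y) \in zip w (behead w) /\ E = [set Some x; Some y]).
Proof.
case: w => // a p _; rewrite /cycle_edges /apex_cycle rot1_cons zip_cons_rcons.
case/mapP => -[u v]; rewrite mem_rcons in_cons => /orP[/eqP[-> ->] -> | ].
  by left; exists (last a p); rewrite ?inE ?eqxx ?orbT // last_map setUC.
rewrite /= in_cons => /orP[/eqP[-> ->] -> | ]; first by left; exists a; rewrite ?inE ?eqxx.
rewrite -map_cons zip_map2 => /mapP[[x y] xy [-> ->] ->].
by right; exists x, y.
Qed.

Lemma min_linkage_edge_disjoint w1 w2 ws :
  min_linkage (w1 :: w2 :: ws) -> edge_disjoint (apex_cycle w1) (apex_cycle w2).
Proof.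
move=> min12; have [link12 _] := min12.
have [/andP[ne1 _] _ _ _ /linkage_cons[/andP[ne2 _] _ _ _ _]] := linkage_cons link12.
apply/hasP => -[E /(mem_cycle_edges_apex_cycle ne1) E1 /(mem_cycle_edges_apex_cycle ne2) E2].
case: E1 E2 => [[v v1 ->] | [x [y [xy1 ->]]]] [[v' v2] | [x' [y' [xy2]]]] /set2_inj.
- case=> -[// _ [vv']]; subst v'.
  by rewrite (negbTE (linkage_ends_disjoint link12 v1)) in v2.
- by case=> -[].
- by case=> -[].
have [p1 [p2 Ew1]] := zip_behead_split xy1; rewrite {}Ew1 in min12.
case=> -[[ex] [ey]]; subst x' y'; have [q1 [q2 Ew2]] := zip_behead_split xy2.
  by rewrite Ew2 in min12; apply: min_linkage_no_common_edge min12.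
move: min12; rewrite {}Ew2 => /min_linkage_rev2; rewrite rev_cat !rev_cons -!cats1 -!catA.
exact: min_linkage_no_common_edge.
Qed.

Lemma min_linkage_packing ws :
  min_linkage ws -> cycle_packing (add_apex e S) (map apex_cycle ws).
Proof.
move=> min_ws; split.
  apply/allP => _ /mapP[w w_ws ->].
  have min_w := min_linkage_perm (perm_to_rem w_ws) min_ws.
  have [walk_w ne_hl h_S l_S _] := linkage_cons min_w.1.
  exact: apex_cycle_is_cycle (min_linkage_uniq min_w) ne_hl h_S l_S.
move=> i j; rewrite size_map => lt_i lt_j ne_ij; rewrite !(nth_map [::]) //.
have [ws' perm_ws] := perm_eq_nth2 [::] lt_i lt_j ne_ij.
exact: min_linkage_edge_disjoint (min_linkage_perm perm_ws min_ws).
Qed.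

End Linkage.

Theorem lemma2p2 (V : finType) (eT : rel V) (S : {set V}) (t : nat) :
  is_tree eT -> #|S| = t -> 1 <= t -> t <= #|V| ->
  phi_is (add_apex eT S) t./2.
Proof.
move=> [[eT_sym _] [V_gt0 [eT_conn eT_acyclic]]] card_S _ _; split.
- have [x0 _] := card_gt0P V_gt0.
  have [ws0 [link_ws0 size_ws0]] := linkage_exists (S := S) x0 (fun x y _ _ => eT_conn x y).
  have [ws [min_ws size_ws]] := min_linkage_exists link_ws0.
  exists [seq apex_cycle w | w <- ws]; split; first exact: (min_linkage_packing eT_sym min_ws).
  by rewrite size_map size_ws size_ws0 card_S.
- move=> cs /(cycle_packing_size eT_acyclic); rewrite card_S => le_cs.
  by rewrite -(doubleK (size cs)) half_leq.
Qed.
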